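(* Let $F$, $X_0$, $B$, $C$ be as in the context, and let $X(t)=\sum_{p=0}^\infty X_pt^p$ be an analytic family of solutions of $F(X)=0$ with initial term $X_0$. Suppose $X_3$ and $X_4$ belong to the linear span $L$ of $X_1$ and $X_2$. Then for all $i,j\in\{1,2\}$ the linear system $CX=-B(X_i,X_j)-B(X_j,X_i)$ has a solution $X\in L$.
   Context: Let $m,n\ge 1$ and let $F=(F_1,\dots,F_n):\mathbb{R}^m\to\mathbb{R}^n$, where each component is a polynomial of degree at most 2 written as $F_k(X)=\sum_{i=1}^m\sum_{j=1}^m\alpha^k_{ij}x_ix_j+\sum_{i=1}^m\beta^k_ix_i+\gamma^k$ for $X=(x_1,\dots,x_m)$, with real coefficients and $\alpha^k_{ij}=\alpha^k_{ji}$. Fix $X_0\in\mathbb{R}^m$ with $F(X_0)=0$. Define the bilinear map $B:\mathbb{R}^m\times\mathbb{R}^m\to\mathbb{R}^n$ by $B(X,Y)_k=\sum_{i,j=1}^m\alpha^k_{ij}x_iy_j$, the linear map $A:\mathbb{R}^m\to\mathbb{R}^n$ by $(AX)_k=\sum_{i=1}^m\beta^k_ix_i$, and the linear map $C:\mathbb{R}^m\to\mathbb{R}^n$ by $CX=B(X_0,X)+B(X,X_0)+AX$. An analytic family of solutions with initial term $X_0$ is a power series $X(t)=\sum_{p=0}^\infty X_pt^p$ with $X_p\in\mathbb{R}^m$, positive radius of convergence, constant term equal to $X_0$, and $F(X(t))=0$ for all sufficiently small $t$. *)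

From Stdlib Require Import Reals.
From Coquelicot Require Import Coquelicot.
From mathcomp Require Import ssreflect ssrfun ssrbool eqtype ssrnat seq fintype bigop.

Open Scope R_scope.

Definition vec (m : nat) := 'I_m -> R.

Definition rsum {m : nat} (f : 'I_m -> R) : R := \big[Rplus/0]_(i < m) f i.

Definition Fmap {m n : nat} (alpha : 'I_n -> 'I_m -> 'I_m -> R)
  (beta : 'I_n -> 'I_m -> R) (gamma : 'I_n -> R) (X : vec m) : vec n :=
  fun k => rsum (fun i => rsum (fun j => alpha k i j * X i * X j))
           + rsum (fun i => beta k i * X i) + gamma k.

Definition Bmap {m n : nat} (alpha : 'I_n -> 'I_m -> 'I_m -> R)
  (X Y : vec m) : vec n :=
  fun k => rsum (fun i => rsum (fun j => alpha k i j * X i * Y j)).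

Definition Amap {m n : nat} (beta : 'I_n -> 'I_m -> R) (X : vec m) : vec n :=
  fun k => rsum (fun i => beta k i * X i).

Definition Cmap {m n : nat} (alpha : 'I_n -> 'I_m -> 'I_m -> R)
  (beta : 'I_n -> 'I_m -> R) (X0 X : vec m) : vec n :=
  fun k => Bmap alpha X0 X k + Bmap alpha X X0 k + Amap beta X k.

Definition series_val {m : nat} (Xs : nat -> vec m) (t : R) : vec m :=
  fun i => PSeries (fun p => Xs p i) t.

Definition analytic_family {m n : nat} (alpha : 'I_n -> 'I_m -> 'I_m -> R)
  (beta : 'I_n -> 'I_m -> R) (gamma : 'I_n -> R) (X0 : vec m)
  (Xs : nat -> vec m) : Prop :=
  (forall i : 'I_m, Rbar_lt 0 (CV_radius (fun p => Xs p i))) /\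
  (forall i : 'I_m, Xs 0%nat i = X0 i) /\
  (exists eps : R, 0 < eps /\
     forall t : R, Rabs t < eps ->
       forall k : 'I_n, Fmap alpha beta gamma (series_val Xs t) k = 0).

Definition in_span2 {m : nat} (U V Y : vec m) : Prop :=
  exists a b : R, forall i : 'I_m, Y i = a * U i + b * V i.

From HB Require Import structures.
From Stdlib Require Import Reals Lra.
From Coquelicot Require Import Coquelicot.
From mathcomp Require Import ssreflect ssrfun ssrbool eqtype ssrnat seq fintype bigop.
Open Scope R_scope.

(* Substituting X(t) into the quadratic map F gives a power series in t whose
   coefficients all vanish; the one of t^(p+1) reads
     C X_(p+1) = - sum_(1 <= l <= p) B(X_l, X_(p+1-l)).
   Orders 1 and 2 give C X_1 = 0 and C X_2 = -B(X_1,X_1), so C maps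
   a X_1 + b X_2 to -b B(X_1,X_1).  Writing X_3 = a X_1 + b X_2 and
   X_4 = a' X_1 + b' X_2, orders 3 and 4 then give
     B(X_1,X_2) + B(X_2,X_1) = b B(X_1,X_1),
     B(X_2,X_2) = (b' - 2a - b^2) B(X_1,X_1),
   so each right-hand side is C applied to a multiple of X_2. *)

Fact Rplus_associative : associative Rplus.
Proof. by move=> x y z; rewrite Rplus_assoc. Qed.

HB.instance Definition _ :=
  Monoid.isComLaw.Build R 0 Rplus Rplus_associative Rplus_comm Rplus_0_l.
HB.instance Definition _ := Monoid.isMulLaw.Build R 0 Rmult Rmult_0_l Rmult_0_r.
HB.instance Definition _ :=
  Monoid.isAddLaw.Build R Rmult Rplus Rmult_plus_distr_r Rmult_plus_distr_l.

Lemma sum_f_R0_big (f : nat -> R) n :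
  sum_f_R0 f n = \big[Rplus/0]_(0 <= l < n.+1) f l.
Proof.
elim: n => [|n IH] /=; first by rewrite big_nat1.
by rewrite IH [RHS]big_nat_recr.
Qed.

Lemma is_pseries_scal_l (c : R) (a : nat -> R) t l :
  is_pseries a t l -> is_pseries (fun p => c * a p) t (c * l).
Proof. by apply: is_pseries_scal; rewrite /mult /= Rmult_comm. Qed.

Lemma is_pseries_head (c : R) t : is_pseries (fun p => if p is O then c else 0) t c.
Proof.
rewrite /is_pseries /is_series.
apply: (filterlim_ext (fun _ => c)); last exact: filterlim_const.
elim=> [|p IH] /=; first by rewrite sum_O /scal /= mult_one_l.
rewrite sum_Sn -IH /plus /= /scal /= /mult /=; ring.
Qed.

Lemma is_pseries_rsum {m : nat} (f : 'I_m -> nat -> R) (l : 'I_m -> R) t :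
  (forall i, is_pseries (f i) t (l i)) ->
  is_pseries (fun p => rsum (fun i => f i p)) t (rsum l).
Proof.
move=> Hf; rewrite /rsum; elim: (index_enum _) => [|i s IH].
  rewrite big_nil; apply: (is_pseries_ext (fun p => if p is O then 0 else 0)).
    by case=> *; rewrite big_nil.
  exact: is_pseries_head.
rewrite big_cons; apply: (is_pseries_ext (fun p => f i p + \big[Rplus/0]_(j <- s) f j p)).
  by move=> p; rewrite big_cons.
exact: is_pseries_plus.
Qed.

Lemma CV_radius_gt0 (a : nat -> R) t :
  t <> 0 -> ex_pseries a t -> Rbar_lt 0 (CV_radius a).
Proof.
move=> t_neq0 Ha; apply: (Rbar_lt_le_trans _ (Rabs t)); first exact: Rabs_pos_lt.
apply: Rbar_not_lt_le => Hout; apply: (CV_disk_outside a t Hout).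
apply: (is_lim_seq_ext (fun p => scal (pow_n t p) (a p))); last exact: ex_series_lim_0.
by move=> p; rewrite /scal /= /mult /= Rmult_comm pow_n_pow.
Qed.

Lemma pseries_coef_eq0 (a : nat -> R) d :
  0 < d -> (forall t, Rabs t < d -> is_pseries a t 0) -> forall p, a p = 0.
Proof.
move=> d_gt0 Ha p.
have a_rad : Rbar_lt 0 (CV_radius a).
  apply: (CV_radius_gt0 a (d / 2)); first lra.
  by exists 0; apply: Ha; rewrite Rabs_pos_eq; lra.
apply: (PSeries_ext_recip a (fun _ => 0) p a_rad); first by rewrite CV_radius_const_0.
exists (mkposreal d d_gt0) => t Ht; rewrite PSeries_const_0.
apply: is_pseries_unique; apply: Ha.
by move: Ht; rewrite /ball /= /AbsRing_ball /abs /minus /plus /opp /= Ropp_0 Rplus_0_r.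
Qed.

Lemma Rbar_gt0_lower_bound {T : finType} (r : T -> Rbar) :
  (forall i, Rbar_lt 0 (r i)) -> exists e, 0 < e /\ forall i, Rbar_lt e (r i).
Proof.
move=> r_gt0.
suff [e [e_gt0 He]] : exists e, 0 < e /\ forall i, i \in enum T -> Rbar_lt e (r i).
  by exists e; split=> // i; apply: He; rewrite mem_enum.
elim: (enum T) => [|i s [e [e_gt0 IH]]]; first by exists 1; split=> //; lra.
have [x [x_gt0 Hx]] : exists x, 0 < x /\ Rbar_lt x (r i).
  by move: (r_gt0 i); case: (r i) => [y| |] //= y_gt0; [exists (y / 2) | exists 1]; split; lra.
exists (Rmin e x); split; first exact: Rmin_pos.
move=> j; rewrite in_cons => /orP [/eqP -> | Hj].
  by apply: Rbar_le_lt_trans Hx; apply: Rmin_r.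
by apply: Rbar_le_lt_trans (IH j Hj); apply: Rmin_l.
Qed.

Section Bilinear.
Context {m n : nat} {alpha : 'I_n -> 'I_m -> 'I_m -> R} {beta : 'I_n -> 'I_m -> R}.

Lemma Bmap_ext {U U' V V' : vec m} {k} :
  U =1 U' -> V =1 V' ->
  Bmap alpha U V k = Bmap alpha U' V' k.
Proof.
move=> HU HV; rewrite /Bmap /rsum.
by apply: eq_bigr => i _; apply: eq_bigr => j _; rewrite HU HV.
Qed.

Lemma Bmap_combl {U V W Y : vec m} {a b k} :
  (forall i, Y i = a * U i + b * V i) ->
  Bmap alpha Y W k = a * Bmap alpha U W k + b * Bmap alpha V W k.
Proof.
move=> HY; rewrite /Bmap /rsum !big_distrr -big_split; apply: eq_bigr => i _.
rewrite !big_distrr -big_split; apply: eq_bigr => j _; rewrite HY /=; ring.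
Qed.

Lemma Bmap_combr {U V W Y : vec m} {a b k} :
  (forall i, Y i = a * U i + b * V i) ->
  Bmap alpha W Y k = a * Bmap alpha W U k + b * Bmap alpha W V k.
Proof.
move=> HY; rewrite /Bmap /rsum !big_distrr -big_split; apply: eq_bigr => i _.
rewrite !big_distrr -big_split; apply: eq_bigr => j _; rewrite HY /=; ring.
Qed.

Lemma Cmap_comb {X0 U V Y : vec m} {a b k} :
  (forall i, Y i = a * U i + b * V i) ->
  Cmap alpha beta X0 Y k = a * Cmap alpha beta X0 U k + b * Cmap alpha beta X0 V k.
Proof.
move=> HY; rewrite /Cmap (Bmap_combl HY) (Bmap_combr HY).
have -> : Amap beta Y k = a * Amap beta U k + b * Amap beta V k.
  rewrite /Amap /rsum !big_distrr -big_split; apply: eq_bigr => i _; rewrite HY /=; ring.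
ring.
Qed.

Lemma Bmap_PS_mult (U V : nat -> vec m) k p :
  rsum (fun i => rsum (fun j =>
     alpha k i j * PS_mult (fun q => U q i) (fun q => V q j) p))
  = \big[Rplus/0]_(0 <= l < p.+1) Bmap alpha (U l) (V (p - l)%N) k.
Proof.
pose G (i : 'I_m) (l : nat) := \big[Rplus/0]_(j < m) (alpha k i j * (U l i * V (p - l)%N j)).
rewrite /rsum (eq_bigr (fun i => \big[Rplus/0]_(0 <= l < p.+1) G i l)); last first.
  move=> i _; rewrite exchange_big; apply: eq_bigr => j _.
  by rewrite /PS_mult sum_f_R0_big big_distrr.
rewrite exchange_big; apply: eq_bigr => l _; apply: eq_bigr => i _.
by apply: eq_bigr => j _; rewrite Rmult_assoc.
Qed.

End Bilinear.

Section AnalyticFamily.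
Context {m n : nat} {alpha : 'I_n -> 'I_m -> 'I_m -> R} {beta : 'I_n -> 'I_m -> R}
  {gamma : 'I_n -> R} {X0 : vec m} {Xs : nat -> vec m}.

Definition Fmap_series_coef (k : 'I_n) (p : nat) : R :=
  rsum (fun i => rsum (fun j =>
     alpha k i j * PS_mult (fun q => Xs q i) (fun q => Xs q j) p))
  + Amap beta (Xs p) k + (if p is O then gamma k else 0).

Lemma is_pseries_Fmap t k :
  (forall i, Rbar_lt (Rabs t) (CV_radius (fun p => Xs p i))) ->
  is_pseries (Fmap_series_coef k) t (Fmap alpha beta gamma (series_val Xs t) k).
Proof.
move=> t_in; have Xs_t i : is_pseries (fun p => Xs p i) t (series_val Xs t i).
  exact/PSeries_correct/CV_radius_inside.
rewrite /Fmap; set x := series_val Xs t.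
have -> : rsum (fun i => rsum (fun j => alpha k i j * x i * x j))
        = rsum (fun i => rsum (fun j => alpha k i j * (x i * x j))).
  by apply: eq_bigr => i _; apply: eq_bigr => j _; rewrite Rmult_assoc.
apply: is_pseries_plus; [apply: is_pseries_plus | exact: is_pseries_head].
  apply: is_pseries_rsum => i; apply: is_pseries_rsum => j.
  by apply/is_pseries_scal_l/is_pseries_mult.
by apply: is_pseries_rsum => i; apply/is_pseries_scal_l.
Qed.

Hypothesis Hfam : analytic_family alpha beta gamma X0 Xs.

Lemma Fmap_series_coef_eq0 k p : Fmap_series_coef k p = 0.
Proof.
case: Hfam => [rad_gt0 [_ [eps [eps_gt0 F_eq0]]]].
have [e [e_gt0 e_rad]] := Rbar_gt0_lower_bound _ rad_gt0.
apply: (pseries_coef_eq0 _ (Rmin eps e)); first exact: Rmin_pos.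
move=> t Ht; rewrite -(F_eq0 t _ k); last by have := Rmin_l eps e; lra.
apply: is_pseries_Fmap => i; apply: Rbar_le_lt_trans (e_rad i) => /=.
by have := Rmin_r eps e; lra.
Qed.

(* Order p+1 of F(X(t)) = 0; the two extreme terms of the Cauchy product give C. *)
Lemma analytic_family_Cmap p k :
  Cmap alpha beta X0 (Xs p.+1) k
  = - \big[Rplus/0]_(0 <= l < p) Bmap alpha (Xs l.+1) (Xs (p - l)%N) k.
Proof.
have := Fmap_series_coef_eq0 k p.+1.
rewrite /Fmap_series_coef Bmap_PS_mult big_nat_recl // big_nat_recr //= subn0 subnn.
case: Hfam => [_ [Xs0 _]].
rewrite (Bmap_ext Xs0 (frefl (Xs p.+1))) (Bmap_ext (frefl (Xs p.+1)) Xs0).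
rewrite (eq_bigr (fun l => Bmap alpha (Xs l.+1) (Xs (p - l)%N) k)) //.
rewrite /Cmap; lra.
Qed.

End AnalyticFamily.

Section SpanSolutions.
Context {m n : nat} {alpha : 'I_n -> 'I_m -> 'I_m -> R} {beta : 'I_n -> 'I_m -> R}
  {X0 : vec m} {Xs : nat -> vec m}.

Hypothesis Cmap_Xs : forall p k,
  Cmap alpha beta X0 (Xs p.+1) k
  = - \big[Rplus/0]_(0 <= l < p) Bmap alpha (Xs l.+1) (Xs (p - l)%N) k.

Lemma Cmap_span2 {Y : vec m} {a b} k :
  (forall i, Y i = a * Xs 1 i + b * Xs 2 i) ->
  Cmap alpha beta X0 Y k = - b * Bmap alpha (Xs 1) (Xs 1) k.
Proof.
move=> HY; rewrite (Cmap_comb HY) !Cmap_Xs big_geq // big_nat1 subn0.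
ring.
Qed.

Lemma Bmap_cross_span2 {a b} k :
  (forall i, Xs 3 i = a * Xs 1 i + b * Xs 2 i) ->
  Bmap alpha (Xs 1) (Xs 2) k + Bmap alpha (Xs 2) (Xs 1) k
  = b * Bmap alpha (Xs 1) (Xs 1) k.
Proof.
move=> HX3; have := Cmap_Xs 2 k.
rewrite (Cmap_span2 k HX3) unlock /= ?subSS !subn0; lra.
Qed.

Lemma Bmap_diag_span2 {a b a' b'} k :
  (forall i, Xs 3 i = a * Xs 1 i + b * Xs 2 i) ->
  (forall i, Xs 4 i = a' * Xs 1 i + b' * Xs 2 i) ->
  Bmap alpha (Xs 2) (Xs 2) k = (b' - 2 * a - b * b) * Bmap alpha (Xs 1) (Xs 1) k.
Proof.
move=> HX3 HX4; have := Cmap_Xs 3 k.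
rewrite (Cmap_span2 k HX4) unlock /= ?subSS !subn0.
rewrite (Bmap_combr HX3) (Bmap_combl HX3).
have := Bmap_cross_span2 k HX3; nra.
Qed.

Lemma Cmap_span2_solvable {i j} :
  (i = 1 \/ i = 2)%nat -> (j = 1 \/ j = 2)%nat ->
  in_span2 (Xs 1) (Xs 2) (Xs 3) -> in_span2 (Xs 1) (Xs 2) (Xs 4) ->
  exists X : vec m, in_span2 (Xs 1) (Xs 2) X /\
    forall k, Cmap alpha beta X0 X k
              = - Bmap alpha (Xs i) (Xs j) k - Bmap alpha (Xs j) (Xs i) k.
Proof.
move=> Hi Hj [a [b HX3]] [a' [b' HX4]].
suff [c Hc] : exists c, forall k,
    Bmap alpha (Xs i) (Xs j) k + Bmap alpha (Xs j) (Xs i) k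
    = c * Bmap alpha (Xs 1) (Xs 1) k.
  exists (fun l => 0 * Xs 1 l + c * Xs 2 l); split; first by exists 0, c.
  by move=> k; rewrite (Cmap_span2 k (fun l => erefl)); have := Hc k; lra.
case: Hi Hj => -> [] ->.
- by exists 2 => k; ring.
- by exists b => k; apply: Bmap_cross_span2 HX3.
- by exists b => k; rewrite Rplus_comm; apply: Bmap_cross_span2 HX3.
- by exists (2 * (b' - 2 * a - b * b)) => k; rewrite (Bmap_diag_span2 k HX3 HX4); ring.
Qed.

End SpanSolutions.

Theorem theorem4 (m n : nat) (Hm : (1 <= m)%nat) (Hn : (1 <= n)%nat)
  (alpha : 'I_n -> 'I_m -> 'I_m -> R) (beta : 'I_n -> 'I_m -> R)
  (gamma : 'I_n -> R)
  (Halpha : forall (k : 'I_n) (i j : 'I_m), alpha k i j = alpha k j i)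
  (X0 : vec m) (HX0 : forall k : 'I_n, Fmap alpha beta gamma X0 k = 0)
  (Xs : nat -> vec m) (Hfam : analytic_family alpha beta gamma X0 Xs)
  (H3 : in_span2 (Xs 1%nat) (Xs 2%nat) (Xs 3%nat))
  (H4 : in_span2 (Xs 1%nat) (Xs 2%nat) (Xs 4%nat)) :
  forall i j : nat, (i = 1 \/ i = 2)%nat -> (j = 1 \/ j = 2)%nat ->
    exists X : vec m, in_span2 (Xs 1%nat) (Xs 2%nat) X /\
      forall k : 'I_n,
        Cmap alpha beta X0 X k
        = - Bmap alpha (Xs i) (Xs j) k - Bmap alpha (Xs j) (Xs i) k.
Proof.
move=> i j Hi Hj.
exact: (Cmap_span2_solvable (analytic_family_Cmap Hfam) Hi Hj H3 H4).
Qed.
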